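(* Let $Q(\mathbf{x})=\mathbf{x}^tM\mathbf{x}$ with $M\in M_d(\mathbb{Z})$ symmetric and $\det M\ne0$. For $g\in\mathrm{SL}_d(\mathbb{Z})$ and $\gamma\in\mathrm{SL}_{d-1}(\mathbb{Q})$, let $\hat g$ be the $d\times(d-1)$ matrix of the first $d-1$ columns of $g$ and $M_{\varphi_g^\gamma}=\gamma^t\hat g^tM^{-1}\hat g\gamma$ (the companion matrix of the form $\mathbf{u}\mapsto Q^*(\hat g\gamma\mathbf{u})$ on $\mathbb{Q}^{d-1}$, where $Q^*(\mathbf{x})=\mathbf{x}^tM^{-1}\mathbf{x}$). Then \[ \det(M_{\varphi_g^\gamma})=\frac{1}{\det M}\,Q(\tau(g)). \]
   Context: $\tau(g)=(g^t)^{-1}\mathbf{e}_d$. *)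

From mathcomp Require Import all_boot all_order all_algebra.
Set Implicit Arguments. Unset Strict Implicit. Unset Printing Implicit Defensive.
Import Order.TTheory GRing.Theory Num.Theory.
Local Open Scope ring_scope.

(* Dimension convention: d = n.+1, so d - 1 = n. *)

Definition ratmx (m k : nat) (A : 'M[int]_(m, k)) : 'M[rat]_(m, k) :=
  map_mx (fun z : int => z%:~R) A.

Definition qform (d : nat) (M : 'M[rat]_d) (x : 'cV[rat]_d) : rat :=
  (x^T *m M *m x) 0 0.

Definition e_last (n : nat) : 'cV[rat]_n.+1 :=
  \col_(i < n.+1) (i == ord_max)%:R.

Definition tau (n : nat) (g : 'M[int]_n.+1) : 'cV[rat]_n.+1 :=
  invmx (ratmx g)^T *m e_last n.

Definition ghat (n : nat) (g : 'M[int]_n.+1) : 'M[rat]_(n.+1, n) :=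
  \matrix_(i < n.+1, j < n) ratmx g i (widen_ord (leqnSn n) j).

Definition Mphi (n : nat) (M g : 'M[int]_n.+1) (gam : 'M[rat]_n) : 'M[rat]_n :=
  gam^T *m (ghat g)^T *m invmx (ratmx M) *m ghat g *m gam.

From mathcomp Require Import all_boot all_order all_algebra.
Set Implicit Arguments. Unset Strict Implicit. Unset Printing Implicit Defensive.
Import Order.TTheory GRing.Theory Num.Theory.
Local Open Scope ring_scope.

(* Let G be g over Q and B = G^t M^-1 G, so det B = (det M)^-1.  As ghat keeps
   the first d-1 columns of G, ghat^t M^-1 ghat is B with its last row and
   column deleted, and gamma has determinant 1, so det M_phi is the (d, d)
   cofactor of B.  By the adjugate formula this cofactor is
   det B * (B^-1)_dd = (det M)^-1 * (G^-1 M G^-t)_dd, and the last diagonal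
   entry of G^-1 M G^-t is Q(G^-t e_d). *)

Section Minors.

Variable R : comUnitRingType.

Lemma row'_col'_mulmx (m k p q : nat) (i : 'I_m.+1) (j : 'I_q.+1)
    (X : 'M[R]_(k, m.+1)) (Y : 'M[R]_(k, p)) (Z : 'M[R]_(p, q.+1)) :
  (col' i X)^T *m Y *m col' j Z = row' i (col' j (X^T *m Y *m Z)).
Proof.
apply/matrixP => a b; rewrite !mxE; apply: eq_bigr => l _; rewrite !mxE.
by congr (_ * _); apply: eq_bigr => r _; rewrite !mxE.
Qed.

Lemma det_congr_mx (n : nat) (P A : 'M[R]_n) :
  \det (P^T *m A *m P) = \det P ^+ 2 * \det A.
Proof. by rewrite !det_mulmx det_tr mulrC mulrA expr2. Qed.

Lemma invmx_mul (n : nat) (A B : 'M[R]_n) :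
  A \in unitmx -> B \in unitmx -> invmx (A *m B) = invmx B *m invmx A.
Proof.
move=> uA uB; have uAB : A *m B \in unitmx by rewrite unitmx_mul uA.
rewrite -[RHS](mulKmx uAB) -mulmxA (mulmxA B) mulmxV // mul1mx mulmxV //.
by rewrite mulmx1.
Qed.

Lemma det_row'_col'_diag (n : nat) (B : 'M[R]_n.+1) (i : 'I_n.+1) :
  B \in unitmx -> \det (row' i (col' i B)) = \det B * invmx B i i.
Proof.
move=> uB; rewrite /invmx uB !mxE mulrA divrr ?mul1r //.
by rewrite /cofactor addnn -muln2 exprM sqrr_sign mul1r.
Qed.

End Minors.

Lemma qform_mulmx_delta (n : nat) (A P : 'M[rat]_n) (i : 'I_n) :
  qform A (P *m delta_mx i 0) = (P^T *m A *m P) i i.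
Proof.
rewrite /qform trmx_mul trmx_delta -!mulmxA -rowE mxE.
by rewrite !mulmxA -colE mxE.
Qed.

Lemma det_ratmx (n : nat) (A : 'M[int]_n) : \det (ratmx A) = (\det A)%:~R.
Proof. exact: (det_map_mx (intr : {rmorphism int -> rat})). Qed.

Lemma ghat_col' (n : nat) (g : 'M[int]_n.+1) : ghat g = col' ord_max (ratmx g).
Proof.
apply/matrixP => a b; rewrite [LHS]mxE [RHS]mxE; congr (fun_of_matrix _ a _).
by apply/val_inj; rewrite /= /bump leqNgt ltn_ord.
Qed.

Lemma e_last_delta (n : nat) : e_last n = delta_mx ord_max 0.
Proof. by apply/matrixP => a b; rewrite !mxE ord1 andbT. Qed.

Theorem lemma6p2 (n : nat) (M g : 'M[int]_n.+1) (gam : 'M[rat]_n) :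
  M^T = M -> \det M != 0 -> \det g = 1 -> \det gam = 1 ->
  \det (Mphi M g gam) = (\det (ratmx M))^-1 * qform (ratmx M) (tau g).
Proof.
move=> _ dM dg dgam.
set A := ratmx M; set G := ratmx g.
have uA : A \in unitmx by rewrite unitmxE det_ratmx unitfE intr_eq0.
have dG : \det G = 1 by rewrite det_ratmx dg.
have uG : G \in unitmx by rewrite unitmxE dG unitr1.
set B := G^T *m invmx A *m G.
have dB : \det B = (\det A)^-1 by rewrite det_congr_mx dG expr1n mul1r det_inv.
have uB : B \in unitmx by rewrite unitmxE dB unitrV -unitmxE.
have iB : invmx B = invmx G *m A *m invmx G^T.
  rewrite !invmx_mul ?unitmx_mul ?unitmx_tr ?unitmx_inv ?uA ?uG //.
  by rewrite invmxK mulmxA.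
have -> : Mphi M g gam = gam^T *m ((ghat g)^T *m invmx A *m ghat g) *m gam.
  by rewrite /Mphi !mulmxA.
rewrite det_congr_mx dgam expr1n mul1r ghat_col' row'_col'_mulmx -/B.
rewrite det_row'_col'_diag // dB iB /tau e_last_delta qform_mulmx_delta.
by rewrite trmx_inv trmxK.
Qed.
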